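(* Let $K$ be a compactum and $U_1,U_2\subset K$ disjoint open sets such that $K\setminus(U_1\cup U_2)$ has at most finitely many components intersecting both $\partial U_1$ and $\partial U_2$, say $n$ of them. Then for any open sets $W_1\subset U_1$ and $W_2\subset U_2$, the set $K\setminus(W_1\cup W_2)$ has at most $n$ components intersecting both $\partial W_1$ and $\partial W_2$.
   Context: A compactum is a compact metric space; boundaries are taken relative to $K$. *)

From HB Require Import structures.
From mathcomp Require Import all_boot all_order all_algebra.
From mathcomp Require Import all_classical all_reals all_analysis.
Set Implicit Arguments. Unset Strict Implicit. Unset Printing Implicit Defensive.
Import Order.TTheory GRing.Theory Num.Theory.
Local Open Scope classical_set_scope.

(* Boundary of a set in the ambient space (the compactum is the whole type). *)
Definition boundary {T : topologicalType} (U : set T) : set T :=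
  closure U `\` interior U.

Definition components {T : topologicalType} (A : set T) : set (set T) :=
  [set C | exists2 x, A x & C = connected_component A x].

Definition bridging_components {T : topologicalType} (A U1 U2 : set T)
  : set (set T) :=
  [set C | components A C /\ (C `&` boundary U1 !=set0) /\
           (C `&` boundary U2 !=set0)].

From HB Require Import structures.
From mathcomp Require Import all_boot all_order all_algebra.
From mathcomp Require Import all_classical all_reals all_analysis.
From mathcomp Require Import finmap.
Set Implicit Arguments.
Unset Strict Implicit.
Unset Printing Implicit Defensive.
Local Open Scope classical_set_scope.
Local Open Scope card_scope.

(* A component C of K \ (W1 ∪ W2) meeting ∂W1 and ∂W2 is a continuum
   meeting cl U1 and cl U2. By the cut-wire theorem (quasi-components of a
   compact Hausdorff space are connected) its part outside U1 ∪ U2 contains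
   a connected set joining cl U1 to cl U2: otherwise that part splits into
   two closed pieces which, together with C ∩ cl U1 and C ∩ cl U2,
   disconnect C. Hence C contains a component of K \ (U1 ∪ U2) meeting ∂U1
   and ∂U2, and since distinct components are disjoint this gives an
   injection between the two families of components. *)

Definition pointed_at (T : topologicalType) (x : T) : Type := T.
HB.instance Definition _ (T : topologicalType) (x : T) :=
  Topological.copy (pointed_at x) T.
HB.instance Definition _ (T : topologicalType) (x : T) :=
  isPointed.Build (pointed_at x) x.

(* [compact_cover] is only stated for pointed spaces; a point of [A] makes [T]
   one. *)
Lemma compact_cover_compact (T : topologicalType) (A : set T) :
  compact A -> cover_compact A.
Proof.
have [[x _] cA|A0 _ I D f _ _] := pselect (A !=set0).
  rewrite -[cover_compact A]/(@cover_compact (pointed_at x) A).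
  by rewrite -compact_cover.
by exists fset0 => // y Ay; exfalso; apply: A0; exists y.
Qed.

Lemma normal_separate_closed (T : topologicalType) (A B : set T) :
  normal_space T -> closed A -> closed B -> A `&` B = set0 ->
  exists U V : set T, [/\ open U, open V, A `<=` U, B `<=` V & U `&` V = set0].
Proof.
move=> nT cA cB /disjoints_subset AB.
have : set_nbhs A (~` B).
  by apply/set_nbhsP; exists (~` B); split => //; exact: closed_openC.
move=> /(nT A cA) [W /set_nbhsP [G [oG AG GW]] clWB].
exists G, (~` closure W); split => //.
- exact/closed_openC/closed_closure.
- by move=> x Bx clWx; exact: clWB x clWx Bx.
- by rewrite -subset0 => x [Gx]; apply; apply/subset_closure/GW.
Qed.

Lemma closure_subC (T : topologicalType) (U V : set T) :
  open U -> U `&` V = set0 -> closure V `<=` ~` U.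
Proof.
by move=> oU; rewrite setIC => /disjoints_subset VU x /(closureS VU)
  /(open_closedC oU).
Qed.

Lemma boundary_open (T : topologicalType) (U : set T) :
  open U -> boundary U = closure U `\` U.
Proof. by move=> /interior_id; rewrite /boundary => ->. Qed.

Lemma closed_separated (T : topologicalType) (A B : set T) :
  closed A -> closed B -> A `&` B = set0 -> separated A B.
Proof. by rewrite /separated => /closure_id <- /closure_id <-. Qed.

Lemma separated_closedUl (T : topologicalType) (A B : set T) :
  closed (A `|` B) -> separated A B -> closed A.
Proof.
move=> cAB [clAB _] x clAx.
have [//|Bx] := cAB x (closureS (@subsetUl _ A B) clAx).
by have : (closure A `&` B) x by []; rewrite clAB.
Qed.

Lemma components_eq (T : topologicalType) (A C1 C2 : set T) :
  components A C1 -> components A C2 -> C1 `&` C2 !=set0 -> C1 = C2.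
Proof.
move=> [x1 _ ->] [x2 _ ->] [y [y1 y2]].
by rewrite (same_connected_component y1) (same_connected_component y2).
Qed.

Lemma components_card_le (T : topologicalType) (A : set T)
    (X Y : set (set T)) :
  X `<=` components A -> (forall D, Y D -> D !=set0) ->
  (forall C, X C -> exists2 D, Y D & D `<=` C) -> X #<= Y.
Proof.
move=> XA Y0 XY.
have [g gP] : {g : set T -> set T & forall C, X C -> Y (g C) /\ g C `<=` C}.
  apply: (@choice _ _ (fun C D => X C -> Y D /\ D `<=` C)) => C.
  have [/XY [D YD DC]|nXC] := pselect (X C); first by exists D.
  by exists set0.
apply/pcard_leP/injfunPex; exists g => [C /gP[]//|C1 C2].
move=> /set_mem X1 /set_mem X2 g12.
apply: components_eq (XA _ X1) (XA _ X2) _.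
have [Yg1 g1C1] := gP _ X1; have [_ g2C2] := gP _ X2.
have [y gy] := Y0 _ Yg1; exists y; split; first exact: g1C1.
by apply: g2C2; rewrite -g12.
Qed.

Section quasi_components.
Context {T : topologicalType}.
Implicit Types F Z : set T.

(* For closed [F] these are exactly the subsets of [F] that are clopen in the
   subspace topology of [F]. *)
Definition clopen_in F Z := [/\ Z `<=` F, closed Z & closed (F `\` Z)].

Lemma clopen_in_refl F : closed F -> clopen_in F F.
Proof. by move=> cF; split => //; rewrite setDv; exact: closed0. Qed.

Lemma clopen_in_bigI F (D : {fset set T}) :
  closed F -> (forall Z, Z \in D -> clopen_in F Z) ->
  clopen_in F (F `&` \bigcap_(Z in [set` D]) Z).
Proof.
move=> cF DF; split; first by move=> x [].
  by apply: closedI => //; apply: closed_bigI => Z /DF[].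
rewrite (_ : _ `\` _ = \bigcup_(Z in [set` D]) (F `\` Z)).
  by apply: closed_bigcup; [exact: finite_fset | move=> Z /DF[]].
apply/seteqP; split => x; last first.
  by move=> [Z DZ [Fx nZx]]; split => // -[_ /(_ Z DZ)].
move=> [Fx /not_andP [//|/existsNP [Z /not_implyP [DZ nZx]]]].
by exists Z.
Qed.

Lemma clopen_in_bigU F (D : {fset set T}) :
  closed F -> (forall Z, Z \in D -> clopen_in F Z) ->
  clopen_in F (\bigcup_(Z in [set` D]) Z).
Proof.
move=> cF DF; split; first by move=> x [Z /DF[+ _ _]]; apply.
  by apply: closed_bigcup; [exact: finite_fset | move=> Z /DF[]].
rewrite (_ : _ `\` _ = F `&` \bigcap_(Z in [set` D]) (F `\` Z)).
  by apply: closedI => //; apply: closed_bigI => Z /DF[].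
apply/seteqP; split => x [Fx nDx]; split => //.
  by move=> Z DZ; split => // Zx; apply: nDx; exists Z.
by move=> [Z DZ]; have [] := nDx Z DZ.
Qed.

Lemma clopen_inI_open F Z U V : clopen_in F Z -> open U -> open V ->
  U `&` V = set0 -> Z `<=` U `|` V -> clopen_in F (Z `&` U).
Proof.
move=> [ZF cZ cFZ] oU oV UV ZUV; split; first by move=> x [/ZF].
  rewrite (_ : Z `&` U = Z `&` ~` V); first exact: closedI cZ (open_closedC oV).
  apply/seteqP; split => x [Zx].
    by move=> Ux; split => // Vx; have : (U `&` V) x by []; rewrite UV.
  by move=> nVx; split => //; have [] := ZUV x Zx.
rewrite (_ : F `\` (Z `&` U) = (F `\` Z) `|` (Z `&` ~` U)).
  exact: closedU cFZ (closedI cZ (open_closedC oU)).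
apply/seteqP; split => x.
  move=> [Fx nZUx]; have [Zx|] := pselect (Z x); last by left.
  by right; split => // Ux; exact: nZUx.
move=> [[Fx nZx]|[Zx nUx]]; first by split => // -[].
by split; [exact: ZF | case].
Qed.

Definition quasi_component F x :=
  \bigcap_(Z in [set Z | clopen_in F Z /\ Z x]) Z.

Lemma quasi_component_closed F x : closed (quasi_component F x).
Proof. by apply: closed_bigI => Z [[]]. Qed.

Lemma quasi_component_sub F x : closed F -> F x -> quasi_component F x `<=` F.
Proof. by move=> cF Fx y; apply; split => //; exact: clopen_in_refl. Qed.

Lemma quasi_component_refl F x : quasi_component F x x.
Proof. by move=> Z []. Qed.

End quasi_components.

Section compact_hausdorff.
Context {T : topologicalType}.
Hypotheses (hT : hausdorff_space T) (cT : compact [set: T]).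
Implicit Types C F O P Q U V Z : set T.

Lemma closed_bigI_sub_open (I : choiceType) (D : set I) (f : I -> set T)
    (O : set T) :
  open O -> (forall i, D i -> closed (f i)) -> \bigcap_(i in D) f i `<=` O ->
  exists2 D' : {fset I}, {subset D' <= D} &
    \bigcap_(i in [set` D']) f i `<=` O.
Proof.
move=> oO cf fO.
have cO : compact (~` O) by apply: (subclosed_compact (open_closedC oO) cT).
have cov : ~` O `<=` \bigcup_(i in D) ~` f i.
  move=> x nOx; apply: contrapT => nx; apply/nOx/fO => i Di.
  by apply: contrapT => nfx; apply: nx; exists i.
have [D' sD' cov'] :=
  compact_cover_compact cO (fun i Di => closed_openC (cf i Di)) cov.
exists D' => // x fx; apply: contrapT => nOx.
by have [i D'i] := cov' x nOx; apply; exact: fx.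
Qed.

Lemma quasi_component_sub_clopen_in F x O : closed F -> F x -> open O ->
  quasi_component F x `<=` O -> exists Z, [/\ clopen_in F Z, Z x & Z `<=` O].
Proof.
move=> cF Fx oO qO.
have cD Z : clopen_in F Z /\ Z x -> closed Z by case=> -[].
have [D sD DO] := @closed_bigI_sub_open _ _ id _ oO cD qO.
have inD Z : Z \in D -> clopen_in F Z /\ Z x by move=> /sD; rewrite in_setE.
exists (F `&` \bigcap_(Z in [set` D]) Z); split.
- by apply: clopen_in_bigI => // Z /inD[].
- by split => // Z /inD[].
- by move=> y [_]; exact: DO.
Qed.

Lemma quasi_component_sub_open F x U V : closed F -> F x -> open U -> open V ->
  U `&` V = set0 -> quasi_component F x `<=` U `|` V -> U x ->
  quasi_component F x `<=` U.
Proof.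
move=> cF Fx oU oV UV qUV Ux.
have [Z [FZ Zx ZUV]] := quasi_component_sub_clopen_in cF Fx (openU oU oV) qUV.
move=> y qy; suff : (Z `&` U) y by case.
by apply: qy; split; [exact: clopen_inI_open FZ oU oV UV ZUV | split].
Qed.

Lemma quasi_component_connected F x :
  closed F -> F x -> connected (quasi_component F x).
Proof.
move=> cF Fx; apply/connectedP => E [E0 qE sE].
have cqE := @quasi_component_closed _ F x; rewrite qE in cqE.
have cE0 := separated_closedUl cqE sE.
have cE1 : closed (E true).
  apply: (@separated_closedUl _ _ (E false)); first by rewrite setUC.
  by rewrite separatedC.
have [U [V [oU oV EU EV UV]]] := normal_separate_closed
  (compact_normal hT cT) cE0 cE1 (separated_disjoint sE).
have qUV : quasi_component F x `<=` U `|` V.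
  by rewrite qE => y [/EU|/EV]; [left|right].
have := @quasi_component_refl _ F x; rewrite {1}qE => -[/EU Ux|/EV Vx].
- have [y E1y] := E0 true; suff : (U `&` V) y by rewrite UV.
  split; last exact: EV.
  by apply: (quasi_component_sub_open cF Fx oU oV UV qUV Ux); rewrite qE; right.
- have [y E0y] := E0 false; suff : (U `&` V) y by rewrite UV.
  split; first exact: EU.
  apply: (quasi_component_sub_open cF Fx oV oU _ _ Vx); first by rewrite setIC.
    by rewrite setUC.
  by rewrite qE; left.
Qed.

Lemma clopen_in_separation F P Q : closed F -> closed P -> closed Q ->
  P `<=` F ->
  (forall C, C `<=` F -> connected C -> C `&` P !=set0 -> C `&` Q = set0) ->
  exists Y, [/\ clopen_in F Y, P `<=` Y & Y `&` Q = set0].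
Proof.
move=> cF cP cQ PF noC.
have sepP p : P p -> exists Z, [/\ clopen_in F Z, Z p & Z `<=` ~` Q].
  move=> Pp; apply: quasi_component_sub_clopen_in => //.
  - exact: PF.
  - exact: closed_openC.
  apply/disjoints_subset/noC.
  - by apply: quasi_component_sub => //; exact: PF.
  - by apply: quasi_component_connected => //; exact: PF.
  - by exists p; split => //; exact: quasi_component_refl.
set D := [set Z | clopen_in F Z /\ Z `<=` ~` Q].
have [D' sD' D'P] : exists2 D' : {fset set T}, {subset D' <= D} &
    \bigcap_(Z in [set` D']) (F `\` Z) `<=` ~` P.
  apply: closed_bigI_sub_open => [|Z [[]]//|p FZp Pp].
    exact: closed_openC.
  have [Z [FZ Zp ZQ]] := sepP p Pp.
  by have [_] := FZp Z (conj FZ ZQ); apply.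
have inD Z : Z \in D' -> D Z by move=> /sD'; rewrite in_setE.
exists (\bigcup_(Z in [set` D']) Z); split.
- by apply: clopen_in_bigU => // Z /inD[].
- move=> p Pp; apply: contrapT => nYp; apply: (D'P p) => // Z D'Z.
  by split; [exact: PF | move=> Zp; apply: nYp; exists Z].
- by apply/disjoints_subset => y [Z /inD[_ ZQ] /ZQ].
Qed.

Lemma connected_bridge C U1 U2 : closed C -> connected C -> open U1 ->
  open U2 -> U1 `&` U2 = set0 ->
  C `&` closure U1 !=set0 -> C `&` closure U2 !=set0 ->
  exists D, [/\ D `<=` C `\` (U1 `|` U2), connected D,
                D `&` closure U1 !=set0 & D `&` closure U2 !=set0].
Proof.
move=> cC conC oU1 oU2 U12 [a [Ca c1a]] [b [Cb c2b]].
set F := C `\` (U1 `|` U2).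
have cF : closed F.
  by rewrite /F setDE; exact: closedI cC (open_closedC (openU oU1 oU2)).
have cl1 : closure U1 `<=` ~` U2 by apply: closure_subC; rewrite // setIC.
have cl2 : closure U2 `<=` ~` U1 by exact: closure_subC.
apply: contrapT => noD.
have noC D : D `<=` F -> connected D -> D `&` (F `&` closure U1) !=set0 ->
    D `&` (F `&` closure U2) = set0.
  move=> DF conD [z [Dz [_ c1z]]]; rewrite -subset0 => w [Dw [_ c2w]].
  by apply: noD; exists D; split => //; [exists z | exists w].
have [Y [[YF cY cFY] PY YQ]] := clopen_in_separation cF
  (closedI cF (@closed_closure _ U1)) (closedI cF (@closed_closure _ U2))
  (fun _ => @proj1 _ _) noC.
set A := (C `&` closure U1) `|` Y.
set B := (C `&` closure U2) `|` (F `\` Y).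
have AB : A `&` B = set0.
  rewrite -subset0 => y [[[Cy c1y]|Yy] [[_ c2y]|[Fy nYy]]].
  - have Fy : F y by split => // -[/(cl2 _ c2y)|/(cl1 _ c1y)].
    apply: noD; exists [set y]; split; first by move=> _ ->.
    + exact: connected1.
    + by exists y.
    + by exists y.
  - exact/nYy/PY.
  - suff : (Y `&` (F `&` closure U2)) y by rewrite YQ.
    by split => //; split => //; exact: YF.
  - exact: nYy.
have sepAB : separated A B.
  by apply: closed_separated => //; apply: closedU => //;
    apply: closedI cC (@closed_closure _ _).
have CAB : C `<=` A `|` B.
  move=> y Cy; have [U1y|nU1y] := pselect (U1 y).
    by left; left; split => //; exact: subset_closure.
  have [U2y|nU2y] := pselect (U2 y).
    by right; left; split => //; exact: subset_closure.
  have Fy : F y by split => // -[].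
  by have [Yy|nYy] := pselect (Y y); [left; right | right; right].
have [/(_ b Cb) Ab|/(_ a Ca) Ba] := connected_subset sepAB CAB conC.
- suff : (A `&` B) b by rewrite AB.
  by split => //; left.
- suff : (A `&` B) a by rewrite AB.
  by split => //; left.
Qed.

Lemma bridging_component_contains (U1 U2 W1 W2 C : set T) :
  open U1 -> open U2 -> U1 `&` U2 = set0 -> open W1 -> open W2 ->
  W1 `<=` U1 -> W2 `<=` U2 ->
  bridging_components (~` (W1 `|` W2)) W1 W2 C ->
  exists2 D, bridging_components (~` (U1 `|` U2)) U1 U2 D & D `<=` C.
Proof.
move=> oU1 oU2 U12 oW1 oW2 WU1 WU2.
move=> [[x _ ->] [[a [Ca [c1a _]]] [b [Cb [c2b _]]]]].
set K' := ~` (W1 `|` W2); set K := ~` (U1 `|` U2).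
have cK' : closed K' by exact: open_closedC (openU oW1 oW2).
have [D [DCK conD [z [Dz c1z]] [w [Dw c2w]]]] := connected_bridge
  (@component_closed _ K' x cK') (@component_connected _ K' x) oU1 oU2 U12
  (ex_intro _ a (conj Ca (closureS WU1 c1a)))
  (ex_intro _ b (conj Cb (closureS WU2 c2b))).
have DK : D `<=` K by move=> y /DCK[].
have [Cz Kz] := DCK z Dz; have Kw := DK w Dw.
exists (connected_component K z).
  split; first by exists z.
  rewrite !boundary_open //; split.
    exists z; split; first exact: connected_component_refl.
    by split => // U1z; apply: Kz; left.
  exists w; split; first exact: (connected_component_max Dz DK conD).
  by split => // U2w; apply: Kw; right.
rewrite (same_connected_component Cz).
apply: connected_component_max; first exact: connected_component_refl.
- move=> y /connected_component_sub Ky [/WU1 U1y|/WU2 U2y]; apply: Ky.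
  + by left.
  + by right.
- exact: component_connected.
Qed.

End compact_hausdorff.

Theorem lemma4p2 (R : realType) (T : metricType R) (n : nat) (U1 U2 : set T) :
  compact [set: T] -> open U1 -> open U2 -> U1 `&` U2 = set0 ->
  bridging_components (~` (U1 `|` U2)) U1 U2 #= `I_n ->
  forall W1 W2 : set T, open W1 -> open W2 -> W1 `<=` U1 -> W2 `<=` U2 ->
  bridging_components (~` (W1 `|` W2)) W1 W2 #<= `I_n.
Proof.
move=> cT oU1 oU2 U12 HU W1 W2 oW1 oW2 WU1 WU2.
apply: (@card_le_trans _ _ _ (bridging_components (~` (U1 `|` U2)) U1 U2));
  last by move/card_eqPle: HU => [].
apply: (@components_card_le _ (~` (W1 `|` W2))) => [C []//|D|C].
  by move=> [_ [[x [Dx _]] _]]; exists x.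
exact: (bridging_component_contains (@metric_hausdorff R T) cT
  oU1 oU2 U12 oW1 oW2 WU1 WU2).
Qed.
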